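(* Let $G$ be a symmetrically factorizable Lie group with subgroups $G_\pm$, and suppose both $\theta$ and $\theta^{-1}$ are conjugating elements. Then for any $g\in G$ (for which the factorizations exist), \[ \bigl(\theta g^{-1}\theta^{-1}\bigr)_\pm=\theta g_\mp\theta^{-1}. \]
   Context: A Lie group $G$ with Lie algebra $\mathfrak g$ is symmetrically factorizable if $\mathfrak g=\mathfrak g_+\oplus\mathfrak g_-$ as a vector space with $\mathfrak g_\pm$ Lie subalgebras, and there is $\theta\in G$ (a conjugating element) with $\theta G_-=G_+\theta$, where $G_\pm$ are the Lie subgroups corresponding to $\mathfrak g_\pm$. For $g$ in an open dense subset one writes $g=g_+g_-^{-1}$ with $g_\pm\in G_\pm$, and $(h)_\pm$ denotes the factors $h_\pm$ of an element $h$. *)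

Set Implicit Arguments.

Record Group := {
  carrier :> Type;
  gmul : carrier -> carrier -> carrier;
  ginv : carrier -> carrier;
  gone : carrier;
  gmulA : forall x y z, gmul x (gmul y z) = gmul (gmul x y) z;
  gmul1l : forall x, gmul gone x = x;
  gmul1r : forall x, gmul x gone = x;
  gmulVl : forall x, gmul (ginv x) x = gone;
  gmulVr : forall x, gmul x (ginv x) = gone
}.

Arguments gmul {g} _ _.
Arguments ginv {g} _.
Arguments gone {g}.

Definition is_subgroup {G : Group} (H : G -> Prop) : Prop :=
  H gone /\ (forall x y, H x -> H y -> H (gmul x y)) /\ (forall x, H x -> H (ginv x)).

(** theta is a conjugating element: theta G_- = G_+ theta (equality of sets). *)
Definition conjugating {G : Group} (Gp Gm : G -> Prop) (theta : G) : Prop :=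
  forall x : G,
    (exists y, Gm y /\ x = gmul theta y) <-> (exists z, Gp z /\ x = gmul z theta).

(** (h)_+ = a and (h)_- = b : h = a b^{-1} with a in G_+ and b in G_-. *)
Definition factorization {G : Group} (Gp Gm : G -> Prop) (h a b : G) : Prop :=
  Gp a /\ Gm b /\ h = gmul a (ginv b).

(** Conjugation by [theta] is an automorphism commuting with inversion, so it
    sends [g^-1 = g_- g_+^-1] to [(theta g_- theta^-1) (theta g_+ theta^-1)^-1].
    The identity [theta G_- = G_+ theta] puts the first factor in [G_+], and the
    same identity for [theta^-1], rewritten as [G_- theta = theta G_+], puts the
    second one in [G_-]. *)


Arguments gmulA {g} _ _ _.
Arguments gmul1l {g} _.
Arguments gmul1r {g} _.
Arguments gmulVl {g} _.
Arguments gmulVr {g} _.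

Section GroupFacts.

Context {G : Group}.
Implicit Types a b t x y : G.

Lemma mulgI a x y : gmul a x = gmul a y -> x = y.
Proof.
  intro Heq.
  rewrite <- (gmul1l x), <- (gmul1l y), <- (gmulVl a), <- !gmulA, Heq.
  reflexivity.
Qed.

Lemma invMg a b : ginv (gmul a b) = gmul (ginv b) (ginv a).
Proof.
  apply (mulgI (gmul a b)).
  rewrite gmulVr, <- !gmulA, (gmulA b), gmulVr, gmul1l, gmulVr.
  reflexivity.
Qed.

Lemma invgK a : ginv (ginv a) = a.
Proof. apply (mulgI (ginv a)). rewrite gmulVr, gmulVl. reflexivity. Qed.

Definition conjby t x : G := gmul (gmul t x) (ginv t).

Lemma conjbyM t x y : conjby t (gmul x y) = gmul (conjby t x) (conjby t y).
Proof.
  unfold conjby.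
  rewrite <- !gmulA, (gmulA (ginv t) t), gmulVl, gmul1l.
  reflexivity.
Qed.

Lemma conjbyV t x : conjby t (ginv x) = ginv (conjby t x).
Proof. unfold conjby. rewrite !invMg, invgK, gmulA. reflexivity. Qed.

Lemma conjby_inv_factor t a b :
  conjby t (ginv (gmul a (ginv b))) = gmul (conjby t b) (ginv (conjby t a)).
Proof. rewrite invMg, invgK, conjbyM, conjbyV. reflexivity. Qed.

Context {Gp Gm : G -> Prop}.

Lemma conjugating_conjby_mem t x :
  conjugating Gp Gm t -> Gm x -> Gp (conjby t x).
Proof.
  intros Ht Hx.
  destruct (proj1 (Ht (gmul t x)) (ex_intro _ x (conj Hx eq_refl))) as [z [Hz E]].
  unfold conjby. rewrite E, <- gmulA, gmulVr, gmul1r. exact Hz.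
Qed.

Lemma conjugating_inv_conjby_mem t x :
  conjugating Gp Gm (ginv t) -> Gp x -> Gm (conjby t x).
Proof.
  intros Ht Hx.
  destruct (proj2 (Ht (gmul x (ginv t))) (ex_intro _ x (conj Hx eq_refl)))
    as [y [Hy E]].
  replace (conjby t x) with y; [exact Hy|].
  unfold conjby. rewrite <- gmulA, E, gmulA, gmulVr, gmul1l. reflexivity.
Qed.

End GroupFacts.

Theorem mainTheorem6 (G : Group) (Gp Gm : G -> Prop) (theta : G)
  (hGp : is_subgroup Gp) (hGm : is_subgroup Gm)
  (hth : conjugating Gp Gm theta) (hthi : conjugating Gp Gm (ginv theta))
  (g gp gm : G) (hg : factorization Gp Gm g gp gm) :
  factorization Gp Gm
    (gmul (gmul theta (ginv g)) (ginv theta))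
    (gmul (gmul theta gm) (ginv theta))
    (gmul (gmul theta gp) (ginv theta)).
Proof.
  destruct hg as [Hgp [Hgm ->]].
  split; [|split].
  - exact (conjugating_conjby_mem theta gm hth Hgm).
  - exact (conjugating_inv_conjby_mem theta gp hthi Hgp).
  - exact (conjby_inv_factor theta gp gm).
Qed.
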